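(* Let $H^n$ be a binary Hamming code of length $n=2^k-1$ and $\lambda:H^n\to\{0,1\}$ a Boolean function with $\lambda(0^n)=0$. For $m=2^j(n+1)-1$, $j\ge 0$, define Hamming codes recursively by $H^{2m+1}=\{(x+y,|x|,x)\mid x\in F^m,\ y\in H^m\}$, and define $\lambda_m:H^m\to\{0,1\}$ by $\lambda_n=\lambda$ and $\lambda_{2m+1}(w)=\lambda_m(y)$ whenever $w\in (y,0^{m+1})+R^{2m+1}_{m+1}$, $y\in H^m$. Let $C_0=V_{H^n}^\lambda=\{(x+y,|x|+\lambda(y),x)\mid x\in F^n, y\in H^n\}$, $C_{i+1}=\{(x+y,|x|,x)\mid x\in F^{\ell_i},\ y\in C_i\}$ where $\ell_i$ is the length of $C_i$, let $s\ge 0$ and $C=C_s$, of length $N=2^{s+1}(n+1)-1$. Then: 1. $C$ is equivalent to the code $V_{H^{(N-1)/2}}^{\lambda_{(N-1)/2}}=\{(x+y,|x|+\lambda_{(N-1)/2}(y),x)\mid x\in F^{(N-1)/2},\ y\in H^{(N-1)/2}\}$. 2. If $R_j^{(N-1)/2}$ (a component of $H^{(N-1)/2}$, $1\le j\le (N-1)/2$) pierces the zeros and ones of $\lambda_{(N-1)/2}$, then the components $R_j^N$ and $R_{j+(N+1)/2}^N$ of $H^N$ pierce the zeros and ones of $\lambda_N$.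
   Context: $|x|=x_1+\dots+x_m\pmod 2$ for $x\in F^m$. For a binary perfect code of length $m$ (here a Hamming code $H^m$) and $i\in\{1,\dots,m\}$, the (linear) $i$-component $R_i^m$ is the linear span of the weight-3 codewords whose support contains $i$; for $H^{2m+1}$ as defined, $R^{2m+1}_{m+1}=\{(x,|x|,x)\mid x\in F^m\}$, and its cosets $(y,0^{m+1})+R^{2m+1}_{m+1}$, $y\in H^m$, partition $H^{2m+1}$. A component $R$ pierces the zeros and ones of a function $\mu$ if $R$ contains both codewords where $\mu=0$ and codewords where $\mu=1$. Two codes of length $N$ are equivalent if one is mapped onto the other by an automorphism of $F^N$ (a translation followed by a coordinate permutation). *)

(* Binary words are represented as sequences of booleans
   (F = GF(2) = bool, addition = xor); a code is a set (predicate) of words. *)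
From mathcomp Require Import all_boot all_fingroup.
Set Implicit Arguments. Unset Strict Implicit. Unset Printing Implicit Defensive.

Definition word := seq bool.
Definition code := word -> Prop.

Definition addw (x y : word) : word := [seq a.1 (+) a.2 | a <- zip x y].
Definition parity (x : word) : bool := foldr addb false x.
Definition wt (x : word) : nat := count id x.
Definition dist (x y : word) : nat := wt (addw x y).
Definition zerow (m : nat) : word := nseq m false.

(* binary Hamming code of length n = linear perfect 1-error-correcting code *)
Definition is_hamming (n : nat) (H : code) : Prop :=
  [/\ (forall w, H w -> size w = n),
      H (zerow n),
      (forall u v, H u -> H v -> H (addw u v)) &
      (forall x, size x = n -> exists! c, H c /\ dist x c <= 1)].

Definition Vcode (m : nat) (H : code) (mu : word -> bool) : code :=
  fun w => exists x y, size x = m /\ H y /\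
    w = addw x y ++ [:: parity x (+) mu y] ++ x.

Definition dbl (m : nat) (D : code) : code :=
  fun w => exists x y, size x = m /\ D y /\ w = addw x y ++ [:: parity x] ++ x.

Definition hlen (n j : nat) : nat := 2 ^ j * n.+1 - 1.

Fixpoint Hfam (n : nat) (H : code) (j : nat) : code :=
  match j with
  | 0 => H
  | j'.+1 => dbl (hlen n j') (Hfam n H j')
  end.

(* lambda_{m_j}: lambda_{m_0} = lambda and lambda_{2m+1}(w) = lambda_m(y) where
   w in (y, 0^{m+1}) + R^{2m+1}_{m+1}, i.e. w = (x+y,|x|,x); y is recovered as
   (first m coordinates of w) + (last m coordinates of w). *)
Fixpoint lamfam (n : nat) (lam : word -> bool) (j : nat) : word -> bool :=
  match j with
  | 0 => lam
  | j'.+1 => fun w =>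
      let m := hlen n j' in
      lamfam n lam j' (addw (take m w) (drop m.+1 w))
  end.

(* C_0 = V_{H^n}^lambda, C_{i+1} = {(x+y,|x|,x) | x in F^{l_i}, y in C_i},
   l_i = length of C_i = 2^{i+1}(n+1) - 1 *)
Fixpoint Cfam (n : nat) (H : code) (lam : word -> bool) (i : nat) : code :=
  match i with
  | 0 => Vcode n H lam
  | i'.+1 => dbl (hlen n i'.+1) (Cfam n H lam i')
  end.

Definition permw (L : nat) (s : {perm 'I_L}) (w : word) : word :=
  [seq nth false w (s i) | i <- enum 'I_L].

Definition equiv_codes (L : nat) (A B : code) : Prop :=
  exists (v : word) (s : {perm 'I_L}), size v = L /\
    forall w, B w <-> exists u, A u /\ w = permw s (addw u v).

Definition span (L : nat) (S : code) : code :=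
  fun w => exists ws : seq word, (forall u, u \in ws -> S u) /\
    w = foldr addw (zerow L) ws.

(* the i-component (i is 1-based, 1 <= i <= L) of a code D of length L:
   span of the weight-3 codewords whose support contains coordinate i *)
Definition component (L : nat) (D : code) (i : nat) : code :=
  span L (fun w => [/\ D w, size w = L, wt w = 3 & nth false w i.-1]).

Definition pierces (R : code) (mu : word -> bool) : Prop :=
  (exists w, R w /\ mu w = false) /\ (exists w, R w /\ mu w = true).

From mathcomp Require Import all_boot all_fingroup zify.
Set Implicit Arguments. Unset Strict Implicit. Unset Printing Implicit Defensive.

(* Split a word of length 2(2M+1)+1 into blocks (P1, p, P2, q, P3, r, P4) of lengths
   M, 1, M, 1, M, 1, M. Both the doubling of V_M^mu and the code V_{2M+1}^{mu o phi} over
   H^{2M+1}, where phi (x+y, |x|, x) = y, consist of the words with P1+P2+P3+P4 in H^M and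
   two parity equations on p and q; the two systems differ exactly by exchanging
   (p, P2) with (q, P3). So swapping these two middle blocks is the required equivalence,
   and since doubling commutes with coordinate permutations, induction on s gives part 1.
   For part 2, phi is linear, maps H^{2M+1} onto H^M and lambda_{2M+1} = lambda_M o phi.
   A weight-3 codeword u of H^M through coordinate j lifts to the weight-3 codewords
   (u, 0, 0) through j and (e_c, 0, u + e_c) through j + M + 1, where c is another point of
   the support of u; hence phi maps both components of H^{2M+1} onto R_j^M, and they
   inherit its piercing. *)

Lemma size_addw x y : size (addw x y) = minn (size x) (size y).
Proof. by rewrite size_map size_zip. Qed.

Lemma nth_addw x y i : size x = size y ->
  nth false (addw x y) i = nth false x i (+) nth false y i.
Proof.
move=> eq_xy; have [lt_ix | le_xi] := ltnP i (size x).
  by rewrite (nth_map (false, false)) ?nth_zip // size_zip -eq_xy minnn.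
by rewrite !nth_default ?size_map ?size_zip -?eq_xy ?minnn.
Qed.

Lemma addw_cat x1 x2 y1 y2 : size x1 = size y1 ->
  addw (x1 ++ x2) (y1 ++ y2) = addw x1 y1 ++ addw x2 y2.
Proof. by move=> eq_s; rewrite /addw zip_cat // map_cat. Qed.

Lemma addw_cons a b x y : addw (a :: x) (b :: y) = a (+) b :: addw x y.
Proof. by []. Qed.

Lemma parity_perm x y : perm_eq x y -> parity x = parity y.
Proof. by rewrite /parity !foldrE; apply: perm_big. Qed.

Lemma parity_cat x y : parity (x ++ y) = parity x (+) parity y.
Proof. by rewrite /parity foldr_cat; elim: x => //= a x ->; rewrite addbA. Qed.

Lemma parity_addw x y : size x = size y -> parity (addw x y) = parity x (+) parity y.
Proof.
elim: x y => [|a x IHx] [|b y] //= [eq_xy].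
by rewrite IHx // -!addbA; congr (_ (+) _); rewrite addbCA.
Qed.

Lemma parity_wt x : parity x = odd (wt x).
Proof. by elim: x => //= a x ->; rewrite /wt /= oddD; case: a. Qed.

Lemma wt_cat x y : wt (x ++ y) = wt x + wt y.
Proof. exact: count_cat. Qed.

Lemma wt_zerow m : wt (zerow m) = 0.
Proof. exact: count_nseq. Qed.

Lemma parity_zerow m : parity (zerow m) = false.
Proof. by rewrite parity_wt wt_zerow. Qed.

Lemma addw0 x m : size x = m -> addw x (zerow m) = x.
Proof.
move=> <-; apply: (@eq_from_nth _ false); first by rewrite size_addw size_nseq minnn.
by move=> i _; rewrite nth_addw ?size_nseq // nth_nseq if_same addbF.
Qed.

Lemma add0w x m : size x = m -> addw (zerow m) x = x.
Proof.
move=> <-; apply: (@eq_from_nth _ false); first by rewrite size_addw size_nseq minnn.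
by move=> i _; rewrite nth_addw ?size_nseq // nth_nseq if_same.
Qed.

Ltac words_eq_pointwise :=
  apply: (@eq_from_nth _ false); [rewrite ?size_addw; lia |];
  move=> ? _; rewrite !nth_addw; try (rewrite ?size_addw; lia);
  repeat match goal with |- context [nth false ?w ?k] => case: (nth false w k) end.

Definition reindex (L : nat) (f : nat -> nat) (w : word) : word :=
  mkseq (fun i => nth false w (f i)) L.

Definition coord_perm (L : nat) (f : nat -> nat) : bool := perm_eq (mkseq f L) (iota 0 L).

Lemma size_reindex L f w : size (reindex L f w) = L.
Proof. exact: size_mkseq. Qed.

Lemma coord_perm_lt L f i : coord_perm L f -> i < L -> f i < L.
Proof.
move=> perm_f lt_iL; have : f i \in mkseq f L by apply: map_f; rewrite mem_iota.
by rewrite (perm_mem perm_f) mem_iota.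
Qed.

Lemma reindex_comp L f g w : coord_perm L g ->
  reindex L g (reindex L f w) = reindex L (f \o g) w.
Proof.
move=> perm_g; apply: (@eq_from_nth _ false); rewrite !size_reindex // => i lt_iL.
by rewrite !nth_mkseq ?(coord_perm_lt perm_g).
Qed.

Lemma coord_perm_id L : coord_perm L id.
Proof. by rewrite /coord_perm /mkseq map_id. Qed.

Lemma coord_perm_comp L f g : coord_perm L f -> coord_perm L g -> coord_perm L (f \o g).
Proof.
move=> perm_f perm_g; rewrite /coord_perm /mkseq map_comp.
exact: perm_trans (perm_map f perm_g) perm_f.
Qed.

Lemma reindex_id L w : size w = L -> reindex L id w = w.
Proof. by move=> <-; apply: mkseq_nth. Qed.

Lemma perm_reindex L f w : coord_perm L f -> size w = L -> perm_eq (reindex L f w) w.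
Proof.
move=> perm_f size_w; rewrite /reindex /mkseq (map_comp (nth false w) f).
by rewrite -{2}(mkseq_nth false w) size_w; apply: perm_map.
Qed.

Lemma parity_reindex L f w : coord_perm L f -> size w = L ->
  parity (reindex L f w) = parity w.
Proof. by move=> perm_f size_w; apply/parity_perm/perm_reindex. Qed.

Lemma reindex_addw L f u v : size u = size v ->
  reindex L f (addw u v) = addw (reindex L f u) (reindex L f v).
Proof.
move=> eq_uv; apply: (@eq_from_nth _ false); first by rewrite size_addw !size_reindex minnn.
move=> i; rewrite size_reindex => lt_iL.
by rewrite nth_addw ?size_reindex // !nth_mkseq // nth_addw.
Qed.

Lemma coord_perm_involutive L f : (forall i, i < L -> f i < L) ->
  (forall i, i < L -> f (f i) = i) -> coord_perm L f.
Proof.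
move=> f_lt fK; apply: uniq_perm.
- apply/(mkseq_uniqP f) => i k lt_iL lt_kL eq_f.
  by rewrite -(fK i) ?eq_f ?fK.
- exact: iota_uniq.
- move=> i; rewrite mem_iota /=; apply/mapP/idP => [[k] |lt_iL].
    by rewrite mem_iota => /f_lt lt_fk ->.
  by exists (f i); rewrite ?fK ?mem_iota ?f_lt.
Qed.

Lemma reindex_involutive L f w : (forall i, i < L -> f i < L) ->
  (forall i, i < L -> f (f i) = i) -> size w = L -> reindex L f (reindex L f w) = w.
Proof.
move=> f_lt fK size_w; rewrite reindex_comp ?coord_perm_involutive //.
rewrite -{2}(reindex_id size_w) /reindex /mkseq.
by apply/eq_in_map => i; rewrite mem_iota /= => lt_iL; rewrite fK.
Qed.

(* Stated as a preimage so that no inverse permutation is needed before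
   coord_preimage_equiv_codes. *)
Definition coord_preimage (L : nat) (f : nat -> nat) (A B : code) : Prop :=
  [/\ coord_perm L f, forall w, B w -> size w = L &
      forall w, A w <-> size w = L /\ B (reindex L f w)].

Lemma coord_preimage_id L A : (forall w, A w -> size w = L) -> coord_preimage L id A A.
Proof.
move=> size_A; split=> [||w] //; first exact: coord_perm_id.
split=> [Aw | [size_w]]; last by rewrite reindex_id.
by rewrite reindex_id ?size_A.
Qed.

Lemma coord_preimage_trans L f g A B C :
  coord_preimage L f A B -> coord_preimage L g B C -> coord_preimage L (f \o g) A C.
Proof.
move=> [perm_f _ AB] [perm_g size_C BC]; split=> [||w] //; first exact: coord_perm_comp.
by rewrite AB BC size_reindex reindex_comp //; split=> [[? [_ ?]] | [? ?]].
Qed.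

Lemma coord_preimage_eq L f A A' B B' :
  (forall w, A w <-> A' w) -> (forall w, B w <-> B' w) ->
  coord_preimage L f A B -> coord_preimage L f A' B'.
Proof.
move=> AA' BB' [perm_f size_B AB]; split=> // w; first by move/BB'/size_B.
by rewrite -AA' -BB' AB.
Qed.

Lemma size_permw L (s : {perm 'I_L}) w : size (permw s w) = L.
Proof. by rewrite size_map size_enum_ord. Qed.

Lemma nth_permw L (s : {perm 'I_L}) w (i : 'I_L) : nth false (permw s w) i = nth false w (s i).
Proof.
by rewrite /permw (nth_map i) ?size_enum_ord ?nth_ord_enum.
Qed.

Lemma permwM L (s t : {perm 'I_L}) w : permw s (permw t w) = permw (s * t) w.
Proof.
apply: (@eq_from_nth _ false); rewrite !size_permw // => i lt_iL.
by rewrite -[i]/(Ordinal lt_iL : nat) !nth_permw permM.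
Qed.

Lemma permw1 L w : size w = L -> permw (1 : {perm 'I_L}) w = w.
Proof.
move=> size_w; apply: (@eq_from_nth _ false); rewrite size_permw // => i lt_iL.
by rewrite -[i]/(Ordinal lt_iL : nat) nth_permw perm1.
Qed.

Lemma coord_preimage_equiv_codes L f A B : coord_preimage L f A B -> equiv_codes L A B.
Proof.
move=> [perm_f size_B AB].
pose g (i : 'I_L) : 'I_L := Ordinal (coord_perm_lt perm_f (ltn_ord i)).
have g_inj : injective g.
  have f_inj : {in gtn L &, injective f}.
    by apply/mkseq_uniqP; rewrite (perm_uniq perm_f) iota_uniq.
  by move=> i k /(congr1 val) /(f_inj _ _ (ltn_ord i) (ltn_ord k)) /val_inj.
have permw_g u : permw (perm g_inj) u = reindex L f u.
  by rewrite /permw /reindex /mkseq -val_enum_ord -map_comp; apply: eq_map => i; rewrite /= permE.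
exists (zerow L), (perm g_inj); split=> [|w]; first exact: size_nseq.
split=> [Bw | [u [/AB [size_u Bu] ->]]]; last by rewrite addw0 // permw_g.
exists (permw (perm g_inj)^-1 w); rewrite addw0 ?size_permw // permwM mulgV permw1 ?size_B //.
by split=> //; apply/AB; rewrite size_permw -permw_g permwM mulgV permw1 ?size_B.
Qed.

Lemma mkseq_around (T : Type) (M : nat) (g : nat -> T) :
  mkseq g (M.+1 + M) = mkseq g M ++ g M :: mkseq (fun i => g (M.+1 + i)) M.
Proof.
rewrite /mkseq addSnnS iotaD /= map_cat /=.
by rewrite -{1}[M.+1]addn0 iotaDl -map_comp.
Qed.

Lemma split_around M (w : word) : size w = M.+1 + M ->
  exists P b Q, [/\ size P = M, size Q = M & w = P ++ b :: Q].
Proof.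
move=> size_w; exists (take M w), (nth false w M), (drop M.+1 w).
split; first by rewrite size_takel // size_w; lia.
  by rewrite size_drop size_w; lia.
by rewrite -drop_nth ?cat_take_drop // size_w; lia.
Qed.

Lemma nth_around_high M P b Q i : size P = M ->
  nth false (P ++ b :: Q) (M.+1 + i) = nth false Q i.
Proof. by move=> <-; rewrite -cat_rcons nth_cat size_rcons ltnNge leq_addr /= addKn. Qed.

Definition block (M : nat) (f : nat -> nat) (i : nat) : nat :=
  if i < M then f i else if i == M then M else M.+1 + f (i - M.+1).

Lemma block_low M f i : i < M -> block M f i = f i.
Proof. by rewrite /block => ->. Qed.

Lemma block_mid M f : block M f M = M.
Proof. by rewrite /block ltnn eqxx. Qed.

Lemma block_high M f i : block M f (M.+1 + i) = M.+1 + f i.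
Proof.
by rewrite /block ltnNge ltnW ?ltn_addr //= gtn_eqF ?ltn_addr // addKn.
Qed.

Lemma mkseq_block M f : mkseq (block M f) (M.+1 + M) =
  mkseq f M ++ M :: map (addn M.+1) (mkseq f M).
Proof.
rewrite mkseq_around block_mid /mkseq -map_comp; congr (_ ++ _ :: _).
  by apply/eq_in_map => i; rewrite mem_iota => /andP [_ /block_low].
by apply: eq_map => i; rewrite /= block_high.
Qed.

Lemma coord_perm_block M f : coord_perm M f -> coord_perm (M.+1 + M) (block M f).
Proof.
move=> perm_f; have := mkseq_around M id; rewrite /coord_perm mkseq_block /mkseq !map_id => ->.
by rewrite perm_cat // perm_cons perm_map.
Qed.

Lemma reindex_block M f P b Q : coord_perm M f -> size P = M ->
  reindex (M.+1 + M) (block M f) (P ++ b :: Q) = reindex M f P ++ b :: reindex M f Q.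
Proof.
move=> perm_f size_P; rewrite /reindex mkseq_around block_mid.
rewrite nth_cat size_P ltnn subnn; congr (_ ++ _ :: _); apply/eq_in_map => i.
  rewrite mem_iota => /andP [_ lt_iM].
  by rewrite block_low // nth_cat size_P coord_perm_lt.
by rewrite /= block_high nth_around_high.
Qed.

Lemma size_dbl M D w : (forall y, D y -> size y = M) -> dbl M D w -> size w = M.+1 + M.
Proof.
move=> size_D [x [y [size_x [/size_D size_y ->]]]].
by rewrite size_cat /= size_addw size_x size_y minnn addSnnS.
Qed.

Lemma coord_preimage_dbl M f A B : coord_preimage M f A B ->
  coord_preimage (M.+1 + M) (block M f) (dbl M A) (dbl M B).
Proof.
move=> [perm_f size_B AB]; split=> [||w]; first exact: coord_perm_block.
  by move=> w; apply: size_dbl.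
split=> [[x [y [size_x [/AB [size_y By] ->]]]] | [size_w [x' [y' [size_x' [By' eq_w']]]]]].
  split; first by rewrite size_cat /= size_addw size_x size_y minnn addSnnS.
  exists (reindex M f x), (reindex M f y); split; rewrite ?size_reindex //; split=> //.
  rewrite reindex_block ?size_addw ?size_x ?size_y ?minnn //.
  by rewrite reindex_addw ?size_x ?size_y // parity_reindex.
have [P [b [Q [size_P size_Q eq_w]]]] := split_around size_w.
move: eq_w'; rewrite eq_w reindex_block // => /eqP; rewrite eqseq_cat; last first.
  by rewrite size_reindex size_addw size_x' (size_B _ By') minnn.
case/andP=> /eqP eq_P /eqP [eq_b eq_Q].
exists Q, (addw P Q); split=> //; split.
  apply/AB; split; first by rewrite size_addw size_P size_Q minnn.
  rewrite reindex_addw ?size_P ?size_Q // eq_P eq_Q.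
  have size_y' := size_B _ By'.
  by rewrite (_ : addw (addw x' y') x' = y') //; words_eq_pointwise.
rewrite eq_b -eq_Q parity_reindex //; congr (_ ++ _ :: _).
words_eq_pointwise.
Qed.

Definition swap_blocks (a b i : nat) : nat :=
  if i < a then i else if i < a + b then i + b else if i < a + b + b then i - b else i.

Lemma swap_blocksK a b i : swap_blocks a b (swap_blocks a b i) = i.
Proof.
rewrite /swap_blocks; case: (ltnP i a) => ?; case: (ltnP i (a + b)) => ?;
  case: (ltnP i (a + b + b)) => ? /=; repeat (case: ifP => [?|/negbT ?]); lia.
Qed.

Lemma swap_blocks_lt a b L i : a + b + b <= L -> i < L -> swap_blocks a b i < L.
Proof.
rewrite /swap_blocks; case: (ltnP i a) => ?; case: (ltnP i (a + b)) => ?;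
  case: (ltnP i (a + b + b)) => ? /=; repeat (case: ifP => [?|/negbT ?]); lia.
Qed.

Lemma reindex_swap_blocks L a b A B C D :
  size A = a -> size B = b -> size C = b -> L = size (A ++ B ++ C ++ D) ->
  reindex L (swap_blocks a b) (A ++ B ++ C ++ D) = A ++ C ++ B ++ D.
Proof.
move=> <- <- /esym eq_BC ->.
apply: (@eq_from_nth _ false) => [|i]; rewrite size_reindex ?size_cat ?eq_BC //.
move=> lt_i; rewrite nth_mkseq ?size_cat // /swap_blocks !nth_cat ?size_cat -eq_BC.
case: (ltnP i (size A)) => ?; case: (ltnP i (size A + size B)) => ?;
  case: (ltnP i (size A + size B + size B)) => ? /=; repeat (case: ifP => [?|/negbT ?]);
  try (congr (nth _ _ _); lia); lia.
Qed.

(* Recovers y from (x+y, |x|, x); lamfam n lam s.+1 is lamfam n lam s \o dbl_proj (hlen n s). *)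
Definition dbl_proj (M : nat) (w : word) : word := addw (take M w) (drop M.+1 w).

Lemma dbl_proj_cat M P b Q : size P = M -> dbl_proj M (P ++ b :: Q) = addw P Q.
Proof.
move=> size_P; rewrite /dbl_proj take_size_cat // -cat_rcons.
by rewrite drop_size_cat ?size_rcons ?size_P.
Qed.

Definition nested_code (M : nat) (H : code) (f g : word -> bool) : code := fun w =>
  exists z c b, [/\ size z = M.+1 + M, size c = M, H b &
    w = addw z (addw c b ++ parity c (+) f b :: c) ++ parity z (+) g b :: z].

Lemma nested_code_swap M H f g w : (forall b, H b -> size b = M) ->
  nested_code M H f g w ->
  nested_code M H g f (reindex ((M.+1 + M).+1 + (M.+1 + M)) (swap_blocks M M.+1) w).
Proof.
move=> size_H [z [c [b [size_z size_c Hb ->]]]]; have size_b := size_H b Hb.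
have [z1 [z0 [z2 [size_z1 size_z2 eq_z]]]] := split_around size_z.
rewrite {z size_z}eq_z addw_cat ?size_addw ?size_z1 ?size_c ?size_b ?minnn // -catA.
rewrite (@reindex_swap_blocks _ _ _ _ (_ :: addw z2 c) (_ :: z1) (z0 :: z2)) //;
  try by rewrite ?size_cat /= ?size_addw ?size_z1 ?size_z2 ?size_c ?size_b ?minnn; lia.
(* With z = (z1, z0, z2) the swapped word reads (z1+c+b, |z|+g b, z1, z0+|c|+f b, z2+c, z0, z2):
   its last three blocks form the new z, and its third block is z2 + (z1 + z2). *)
exists (addw z2 c ++ z0 :: z2), (addw z1 z2), b; split=> //.
- by rewrite size_cat /= size_addw size_z2 size_c minnn addSnnS.
- by rewrite size_addw size_z1 size_z2 minnn.
rewrite addw_cat ?size_addw ?size_z2 ?size_c ?size_z1 ?size_b ?minnn // addw_cons -catA.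
congr (_ ++ _ :: _ ++ _ :: _).
- by words_eq_pointwise.
- rewrite parity_cat /= parity_addw ?size_z1 ?size_z2 //.
  by case: (parity z1); case: (parity z2); case: z0; case: (g b).
- by words_eq_pointwise.
- rewrite parity_cat /= !parity_addw ?size_z2 ?size_c //.
  by case: (parity z2); case: (parity c); case: z0; case: (f b).
Qed.

Lemma size_nested_code M H f g w : (forall b, H b -> size b = M) ->
  nested_code M H f g w -> size w = (M.+1 + M).+1 + (M.+1 + M).
Proof.
move=> size_H [z [c [b [size_z size_c /size_H size_b ->]]]].
by rewrite size_cat /= !size_addw size_cat /= size_addw size_z size_c size_b !minnn; lia.
Qed.

Lemma coord_preimage_nested_swap M H f g : (forall b, H b -> size b = M) ->
  coord_preimage ((M.+1 + M).+1 + (M.+1 + M)) (swap_blocks M M.+1)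
    (nested_code M H f g) (nested_code M H g f).
Proof.
move=> size_H; set L := (M.+1 + M).+1 + (M.+1 + M).
have swap_lt i : i < L -> swap_blocks M M.+1 i < L.
  by apply: swap_blocks_lt; rewrite /L; lia.
have swapK i : i < L -> swap_blocks M M.+1 (swap_blocks M M.+1 i) = i by rewrite swap_blocksK.
split=> [||w]; first exact: coord_perm_involutive.
  by move=> w; apply: size_nested_code.
split=> [Aw | [size_w /(nested_code_swap size_H)]].
  by split; [apply: size_nested_code Aw | apply: nested_code_swap].
by rewrite reindex_involutive.
Qed.

Lemma dbl_Vcode_nested M H mu w :
  dbl (M.+1 + M) (Vcode M H mu) w <-> nested_code M H mu (fun _ => false) w.
Proof.
split=> [[z [_ [size_z [[c [b [size_c [Hb ->]]]] ->]]]] | [z [c [b [size_z size_c Hb ->]]]]].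
  by exists z, c, b; rewrite addbF.
exists z, (addw c b ++ parity c (+) mu b :: c); rewrite addbF.
by split=> //; split=> //; exists c, b.
Qed.

Lemma Vcode_dbl_nested M H mu w : (forall b, H b -> size b = M) ->
  Vcode (M.+1 + M) (dbl M H) (mu \o dbl_proj M) w <-> nested_code M H (fun _ => false) mu w.
Proof.
move=> size_H.
have proj_inner c b : size c = M -> H b -> dbl_proj M (addw c b ++ parity c :: c) = b.
  move=> size_c /size_H size_b.
  by rewrite dbl_proj_cat ?size_addw ?size_c ?size_b ?minnn //; words_eq_pointwise.
split=> [[z [_ [size_z [[c [b [size_c [Hb ->]]]] ->]]]] | [z [c [b [size_z size_c Hb ->]]]]].
  by exists z, c, b; rewrite /= proj_inner ?addbF.
exists z, (addw c b ++ parity c :: c); rewrite /= proj_inner // addbF.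
by split=> //; split=> //; exists c, b.
Qed.

Lemma coord_preimage_dbl_Vcode M H mu : (forall b, H b -> size b = M) ->
  coord_preimage ((M.+1 + M).+1 + (M.+1 + M)) (swap_blocks M M.+1)
    (dbl (M.+1 + M) (Vcode M H mu)) (Vcode (M.+1 + M) (dbl M H) (mu \o dbl_proj M)).
Proof.
move=> size_H; apply: coord_preimage_eq (coord_preimage_nested_swap _ _ size_H) => w.
  exact: iff_sym (dbl_Vcode_nested _ _ _ _).
exact: iff_sym (Vcode_dbl_nested _ _ size_H).
Qed.

Lemma hlen0 n : hlen n 0 = n.
Proof. by rewrite /hlen expn0 mul1n subn1. Qed.

Lemma hlenS n s : hlen n s.+1 = (hlen n s).+1 + hlen n s.
Proof. by rewrite /hlen expnS -mulnA; have := expn_gt0 2 s; lia. Qed.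

Lemma size_Vcode M H mu w : (forall b, H b -> size b = M) ->
  Vcode M H mu w -> size w = M.+1 + M.
Proof.
move=> size_H [x [y [size_x [/size_H size_y ->]]]].
by rewrite size_cat /= size_addw size_x size_y minnn addSnnS.
Qed.

Lemma size_Hfam n H s w : (forall b, H b -> size b = n) -> Hfam n H s w -> size w = hlen n s.
Proof.
move=> size_H; elim: s w => [|s IHs] w; first by rewrite hlen0; apply: size_H.
by rewrite hlenS; apply: size_dbl.
Qed.

Lemma Cfam_coord_preimage n H lam s : (forall b, H b -> size b = n) ->
  exists f, coord_preimage (hlen n s.+1) f (Cfam n H lam s)
    (Vcode (hlen n s) (Hfam n H s) (lamfam n lam s)).
Proof.
move=> size_H; elim: s => [|s [f IHs]].
  by exists id; rewrite hlenS hlen0; apply: coord_preimage_id => w; apply: size_Vcode.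
exists (block (hlen n s.+1) f \o swap_blocks (hlen n s) (hlen n s).+1).
rewrite [hlen n s.+2]hlenS; apply: coord_preimage_trans (coord_preimage_dbl IHs) _.
rewrite [hlen n s.+1]hlenS; apply: coord_preimage_dbl_Vcode => b.
exact: size_Hfam.
Qed.

Lemma dbl_proj_addw M u v : size u = M.+1 + M -> size v = M.+1 + M ->
  dbl_proj M (addw u v) = addw (dbl_proj M u) (dbl_proj M v).
Proof.
move=> /split_around [P [b [Q [size_P size_Q ->]]]].
move=> /split_around [P' [b' [Q' [size_P' size_Q' ->]]]].
rewrite addw_cat ?size_P ?size_P' // addw_cons !dbl_proj_cat ?size_addw ?size_P ?size_P' ?minnn //.
by words_eq_pointwise.
Qed.

Lemma dbl_proj_zerow M : dbl_proj M (zerow (M.+1 + M)) = zerow M.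
Proof. by rewrite /zerow addSnnS nseqD dbl_proj_cat ?size_nseq // addw0 ?size_nseq. Qed.

Lemma size_foldr_addw L ws : (forall u, u \in ws -> size u = L) ->
  size (foldr addw (zerow L) ws) = L.
Proof.
elim: ws => [|u ws IHws] size_ws /=; first exact: size_nseq.
rewrite size_addw size_ws ?mem_head // IHws ?minnn // => v v_ws.
by rewrite size_ws // in_cons v_ws orbT.
Qed.

Lemma span_lift L M (phi : word -> word) (S S' : code) :
  (forall u v, size u = L -> size v = L -> phi (addw u v) = addw (phi u) (phi v)) ->
  phi (zerow L) = zerow M -> (forall v, S' v -> size v = L) ->
  (forall u, S u -> exists2 v, S' v & phi v = u) ->
  forall w, span M S w -> exists2 w', span L S' w' & phi w' = w.
Proof.
move=> phiD phi0 size_S' lift _ [ws [S_ws ->]].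
elim: ws S_ws => [|u ws IHws] S_ws; first by exists (zerow L) => //; exists [::].
have [_ [ws' [S'_ws' ->]] phi_ws'] : exists2 w', span L S' w' & phi w' = foldr addw (zerow M) ws.
  by apply: IHws => v v_ws; apply: S_ws; rewrite in_cons v_ws orbT.
have [v S'v phi_v] := lift u (S_ws u (mem_head u ws)).
exists (addw v (foldr addw (zerow L) ws')).
  by exists (v :: ws'); split=> // v'; rewrite in_cons => /predU1P [->|/S'_ws'].
have size_ws' : size (foldr addw (zerow L) ws') = L.
  by apply: size_foldr_addw => v' /S'_ws' /size_S'.
by rewrite phiD ?size_ws' ?(size_S' _ S'v) // phi_v phi_ws'.
Qed.

Lemma pierces_lift (R R' : code) (phi : word -> word) mu :
  (forall w, R w -> exists2 w', R' w' & phi w' = w) -> pierces R mu -> pierces R' (mu \o phi).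
Proof.
move=> lift [[w0 [R_w0 mu_w0]] [w1 [R_w1 mu_w1]]].
have [w0' R'_w0' phi_w0'] := lift w0 R_w0; have [w1' R'_w1' phi_w1'] := lift w1 R_w1.
by split; [exists w0' | exists w1']; rewrite /= ?phi_w0' ?phi_w1'.
Qed.

Lemma wt_set_nth w c b : c < size w -> wt (set_nth false w c b) = wt w + b - nth false w c.
Proof. exact: count_set_nth_ltn. Qed.

Lemma nth_true_lt (w : word) i : nth false w i -> i < size w.
Proof. by case: ltnP => // /(nth_default false) ->. Qed.

Lemma other_support (u : word) d : 1 < wt u -> nth false u d ->
  exists2 c, c != d & nth false u c.
Proof.
move=> wt_u u_d; have lt_d := nth_true_lt u_d.
have : has id (set_nth false u d false).
  by rewrite has_count -/(wt _) wt_set_nth // u_d addn0; lia.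
case/(has_nthP false) => c _; rewrite nth_set_nth /=.
by case: eqP => // /eqP ne_cd u_c; exists c.
Qed.

Lemma weight3_lift_low M D j u : j.-1 < M ->
  [/\ D u, size u = M, wt u = 3 & nth false u j.-1] ->
  exists2 v, [/\ dbl M D v, size v = M.+1 + M, wt v = 3 & nth false v j.-1] &
    dbl_proj M v = u.
Proof.
move=> lt_jM [Du size_u wt_u u_j]; exists (u ++ false :: zerow M).
  split; last by rewrite nth_cat size_u lt_jM.
  - exists (zerow M), u; split; rewrite ?size_nseq //; split=> //.
    by rewrite add0w // parity_zerow.
  - by rewrite size_cat /= size_nseq size_u addSnnS.
  - by rewrite wt_cat /= wt_zerow wt_u.
by rewrite dbl_proj_cat // addw0.
Qed.

Lemma weight3_lift_high M D j u : 0 < j -> j.-1 < M ->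
  [/\ D u, size u = M, wt u = 3 & nth false u j.-1] ->
  exists2 v, [/\ dbl M D v, size v = M.+1 + M, wt v = 3 & nth false v (j + M.+1).-1] &
    dbl_proj M v = u.
Proof.
move=> j_gt0 lt_jM [Du size_u wt_u u_j].
have [c ne_cj u_c] : exists2 c, c != j.-1 & nth false u c.
  by apply: other_support; rewrite ?wt_u.
have lt_cM : c < M by rewrite -size_u nth_true_lt.
pose x := set_nth false u c false; pose e := addw x u.
have size_x : size x = M by rewrite size_set_nth size_u; apply/maxn_idPr.
have size_e : size e = M by rewrite size_addw size_x size_u minnn.
have wt_x : wt x = 2 by rewrite wt_set_nth ?size_u // u_c wt_u.
have eq_e : e = set_nth false (zerow M) c true.
  apply: (@eq_from_nth _ false) => [|i _].
    by rewrite size_set_nth size_nseq size_e; apply/esym/maxn_idPr.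
  rewrite nth_addw ?size_x ?size_u // !nth_set_nth /= nth_nseq.
  by case: eqP => [->|_]; [rewrite u_c | case: (nth false u i); case: ifP].
exists (e ++ false :: x).
  split.
  - exists x, u; split=> //; split=> //.
    by rewrite parity_wt wt_x.
  - by rewrite size_cat /= size_e size_x addSnnS.
  - by rewrite wt_cat /= wt_x eq_e wt_set_nth ?size_nseq // wt_zerow nth_nseq lt_cM.
  - rewrite (_ : (j + M.+1).-1 = M.+1 + j.-1); last by lia.
    by rewrite nth_around_high // nth_set_nth /= eq_sym (negPf ne_cj).
by rewrite dbl_proj_cat // /e; words_eq_pointwise.
Qed.

Lemma pierces_component_dbl M D mu j : 0 < j <= M -> pierces (component M D j) mu ->
  pierces (component (M.+1 + M) (dbl M D) j) (mu \o dbl_proj M) /\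
  pierces (component (M.+1 + M) (dbl M D) (j + M.+1)) (mu \o dbl_proj M).
Proof.
case/andP=> j_gt0 le_jM pierces_j; have lt_jM : j.-1 < M by rewrite prednK.
split; apply: (pierces_lift _ pierces_j);
  apply: span_lift (@dbl_proj_addw M) (dbl_proj_zerow M) _ _; try by move=> v [].
  by move=> u; apply: weight3_lift_low.
by move=> u; apply: weight3_lift_high.
Qed.

Theorem lemma5 (k n : nat) (H : code) (lam : word -> bool) :
  n = 2 ^ k - 1 ->
  is_hamming n H ->
  lam (zerow n) = false ->
  forall s : nat,
    let N := 2 ^ s.+1 * n.+1 - 1 in
    let M := 2 ^ s * n.+1 - 1 in
    (* N = length of C_s, M = (N-1)/2, (N+1)/2 = M+1 *)
    equiv_codes N (Cfam n H lam s) (Vcode M (Hfam n H s) (lamfam n lam s)) /\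
    (forall j : nat, 1 <= j <= M ->
       pierces (component M (Hfam n H s) j) (lamfam n lam s) ->
       pierces (component N (Hfam n H s.+1) j) (lamfam n lam s.+1) /\
       pierces (component N (Hfam n H s.+1) (j + M.+1)) (lamfam n lam s.+1)).
Proof.
move=> _ [size_H _ _ _] _ s N M; split.
  by have [f] := Cfam_coord_preimage lam s size_H; apply: coord_preimage_equiv_codes.
move=> j le_jM; rewrite /N -/(hlen n s.+1) hlenS.
exact: pierces_component_dbl.
Qed.
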